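(* Let $K\ge 2$ and let $M,N,d$ be positive integers with $d\le\min(M,N)$. The symmetric system $(M\times N,d)^K$ is proper if and only if $N_v\ge N_e$, where $N_v=Kd(M+N-2d)$ and $N_e=K(K-1)d^2$; equivalently, it is proper if and only if \[ M+N-(K+1)d\ge 0 . \]
   Context: $(M\times N,d)^K$ denotes the $K$-user system $\prod_{k=1}^K(M^{[k]}\times N^{[k]},d^{[k]})$ with $M^{[k]}=M$, $N^{[k]}=N$, $d^{[k]}=d$ for all $k$. For a general $K$-user system $\prod_{k=1}^K(M^{[k]}\times N^{[k]},d^{[k]})$ (transmitter $k$ has $M^{[k]}$ antennas, receiver $k$ has $N^{[k]}$, user $k$ demands $d^{[k]}$ degrees of freedom), associate abstract variables: for each transmitter $j$ and $n\in\{1,\dots,d^{[j]}\}$, the $M^{[j]}-d^{[j]}$ variables $x^{[j]}_{n,1},\dots,x^{[j]}_{n,M^{[j]}-d^{[j]}}$; for each receiver $k$ and $m\in\{1,\dots,d^{[k]}\}$, the $N^{[k]}-d^{[k]}$ variables $y^{[k]}_{m,1},\dots,y^{[k]}_{m,N^{[k]}-d^{[k]}}$. The equations are the symbols $E^{mn}_{kj}$ for $j\ne k$, $m\le d^{[k]}$, $n\le d^{[j]}$ (standing for $\mathbf u^{[k]\dagger}_m\mathbf H^{[kj]}\mathbf v^{[j]}_n=0$); $\mathcal E$ is the set of all of them, and $\mathrm{var}(E^{mn}_{kj})=\{x^{[j]}_{n,i}\}_{i}\cup\{y^{[k]}_{m,i}\}_{i}$. The system is proper if for every $S\subseteq\mathcal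 E$, $|S|\le\left|\bigcup_{E\in S}\mathrm{var}(E)\right|$, and improper otherwise. $N_v$ is the total number of variables, $\sum_k d^{[k]}(M^{[k]}+N^{[k]}-2d^{[k]})$, and $N_e=|\mathcal E|=\sum_{k\ne j}d^{[k]}d^{[j]}$. *)

From mathcomp Require Import all_boot.
Set Implicit Arguments. Unset Strict Implicit. Unset Printing Implicit Defensive.

(* A general K-user MIMO interference system prod_k (M k x N k, d k):
   users are indexed by 'I_K; M k, N k, d k are antennas at transmitter k,
   antennas at receiver k, and demanded degrees of freedom of user k. *)

Section System.
Variables (K : nat) (M N d : 'I_K -> nat).

(* A common bound for all stream / variable indices. *)
Definition bnd : nat := (\max_(k < K) (M k + N k + d k)).+1.

(* Equation symbols E^{mn}_{kj}, encoded as (k, j, m, n). *)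
Definition eqn := ('I_K * 'I_K * 'I_bnd * 'I_bnd)%type.

Definition is_eqn (E : eqn) : bool :=
  let: (k, j, m, n) := E in [&& k != j, (m < d k)%N & (n < d j)%N].

Definition eqns : {set eqn} := [set E | is_eqn E].

(* Variables: (false, j, n, i) stands for x^{[j]}_{n,i} (n < d j, i < M j - d j),
   (true, k, m, i) stands for y^{[k]}_{m,i} (m < d k, i < N k - d k). *)
Definition var := (bool * 'I_K * 'I_bnd * 'I_bnd)%type.

Definition is_var (v : var) : bool :=
  let: (b, k, n, i) := v in
  if b then (n < d k)%N && (i < N k - d k)%N
  else (n < d k)%N && (i < M k - d k)%N.

Definition varE (E : eqn) : {set var} :=
  let: (k, j, m, n) := E in
  [set v : var | [|| [&& v.1.1.1 == false, v.1.1.2 == j, v.1.2 == n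
                        & (nat_of_ord v.2 < M j - d j)%N]
                   | [&& v.1.1.1 == true, v.1.1.2 == k, v.1.2 == m
                        & (nat_of_ord v.2 < N k - d k)%N]]].

Definition proper : Prop :=
  forall S : {set eqn}, S \subset eqns ->
    (#|S| <= #|\bigcup_(E in S) varE E|)%N.

Definition Nv : nat := \sum_(k < K) d k * (M k + N k - 2 * d k).
Definition Ne : nat := \sum_(k < K) \sum_(j < K | j != k) d k * d j.

End System.

Definition sym_proper (K M N d : nat) : Prop :=
  @proper K (fun _ => M) (fun _ => N) (fun _ => d).
Definition sym_Nv (K M N d : nat) : nat :=
  @Nv K (fun _ => M) (fun _ => N) (fun _ => d).
Definition sym_Ne (K M N d : nat) : nat :=
  @Ne K (fun _ => d).

From Pilot Require Import Defs.
From mathcomp Require Import all_boot zify.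
Set Implicit Arguments. Unset Strict Implicit. Unset Printing Implicit Defensive.

(* View the equations and variables of a system as a bipartite
   incidence structure.  In the symmetric system (M x N, d)^K every equation
   involves exactly r := (M - d) + (N - d) variables, and every variable that
   occurs at all occurs in exactly c := (K - 1) * d equations.  Counting the
   incidences between a set S of equations and the variables of S twice gives
   #|S| * r <= #|var(S)| * c, with equality when S is the set of all
   equations.  Hence the system is proper iff c <= r. *)

Section Incidence.
Variables (Eq Var : finType) (vars : Eq -> {set Var}).

Definition hall_condition (U : {set Eq}) : Prop :=
  forall S : {set Eq}, S \subset U -> #|S| <= #|\bigcup_(E in S) vars E|.

Definition degree_in (S : {set Eq}) (v : Var) : nat := #|[set E in S | v \in vars E]|.

Lemma double_counting (S : {set Eq}) :
  \sum_(E in S) #|vars E| = \sum_(v in \bigcup_(E in S) vars E) degree_in S v.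
Proof.
set V := \bigcup_(E in S) vars E.
have indicator (T : finType) (A B : {set T}) :
    \sum_(x in A) (x \in B : nat) = #|A :&: B|.
  rewrite -sum1_card [RHS](eq_bigl (fun x => (x \in A) && (x \in B))) => [|x];
    last by rewrite inE.
  by rewrite big_mkcondr /=; apply: eq_bigr => x _; case: (x \in B).
transitivity (\sum_(E in S) \sum_(v in V) (v \in vars E : nat)).
  apply: eq_bigr => E ES.
  by rewrite indicator (setIidPr _) // (bigcup_sup _ ES).
rewrite exchange_big; apply: eq_bigr => v _.
rewrite /degree_in -[RHS]sum1_card -big_mkcondr /=.
by apply: eq_bigl => E; rewrite !inE.
Qed.

Variables (U : {set Eq}) (r c : nat).
Hypothesis size_vars : forall E, E \in U -> #|vars E| = r.

Lemma incidences (S : {set Eq}) : S \subset U ->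
  #|S| * r = \sum_(v in \bigcup_(E in S) vars E) degree_in S v.
Proof.
move=> sSU; rewrite -double_counting -sum_nat_const.
by apply: eq_bigr => E ES; rewrite size_vars // (subsetP sSU).
Qed.

Lemma hall_of_degree_le :
  0 < r -> c <= r -> (forall E v, E \in U -> v \in vars E -> degree_in U v <= c) ->
  hall_condition U.
Proof.
move=> r_gt0 le_cr deg_le S sSU; rewrite -(leq_pmul2r r_gt0) incidences //.
apply: leq_trans (leq_mul (leqnn _) le_cr); rewrite -sum_nat_const.
apply: leq_sum => v /bigcupP[E ES vE]; apply: leq_trans (deg_le E v _ vE);
  last exact: (subsetP sSU).
by apply: subset_leq_card; apply/subsetP => E'; rewrite !inE => /andP[/(subsetP sSU) -> ->].
Qed.

Lemma degree_le_of_hall :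
  U != set0 -> (forall E v, E \in U -> v \in vars E -> degree_in U v = c) ->
  hall_condition U -> c <= r.
Proof.
move=> U_n0 deg_eq hall.
have U_gt0 : 0 < #|U| by rewrite card_gt0.
rewrite -(leq_pmul2l U_gt0).
have counts : #|U| * r = #|\bigcup_(E in U) vars E| * c.
  rewrite incidences // -sum_nat_const; apply: eq_bigr => v /bigcupP[E EU vE].
  exact: deg_eq vE.
by rewrite counts leq_mul ?hall.
Qed.

End Incidence.

Lemma proper_hall (K : nat) (M N d : 'I_K -> nat) :
  Defs.proper M N d <-> hall_condition (@varE K M N d) (eqns M N d).
Proof. by []. Qed.

Lemma mem_imset_last (T1 T2 T3 T4 : finType) (c c' : T1) (k k' : T2) (n n' : T3)
    (i : T4) (A : {set T4}) :
  ((c, k, n, i) \in (fun x => (c', k', n', x)) @: A) =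
  [&& c == c', k == k', n == n' & i \in A].
Proof.
apply/imsetP/idP => [[x xA [-> -> -> ->]]|]; first by rewrite !eqxx.
by case/and4P => /eqP-> /eqP-> /eqP-> iA; exists i.
Qed.

Lemma mem_imset_13 (T1 T2 T3 T4 : finType) (k : T1) (j j' : T2) (m : T3) (n n' : T4)
    (A : {set T1 * T3}) :
  ((k, j, m, n) \in (fun p : T1 * T3 => (p.1, j', p.2, n')) @: A) =
  [&& j == j', n == n' & (k, m) \in A].
Proof.
apply/imsetP/idP => [[[x y] pA [-> -> -> ->]]|]; first by rewrite !eqxx.
by case/and3P => /eqP-> /eqP-> kmA; exists (k, m).
Qed.

Lemma mem_imset_24 (T1 T2 T3 T4 : finType) (k k' : T1) (j : T2) (m m' : T3) (n : T4)
    (A : {set T2 * T4}) :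
  ((k, j, m, n) \in (fun p : T2 * T4 => (k', p.1, m', p.2)) @: A) =
  [&& k == k', m == m' & (j, n) \in A].
Proof.
apply/imsetP/idP => [[[x y] pA [-> -> -> ->]]|]; first by rewrite !eqxx.
by case/and3P => /eqP-> /eqP-> jnA; exists (j, n).
Qed.

Lemma card_ord_lt (n c : nat) : c <= n -> #|[set i : 'I_n | i < c]| = c.
Proof.
move=> le_cn; rewrite -sum1_card (eq_bigl (fun i : 'I_n => i < c)) => [|i];
  last by rewrite inE.
by rewrite (big_ord_narrow le_cn) sum1_card card_ord.
Qed.

Section Symmetric.
Variables K M N d : nat.
Hypotheses (le2K : 2 <= K) (d_gt0 : 0 < d) (le_dM : d <= M) (le_dN : d <= N).

Local Notation Mc := (fun _ : 'I_K => M).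
Local Notation Nc := (fun _ : 'I_K => N).
Local Notation dc := (fun _ : 'I_K => d).
Local Notation B := (bnd Mc Nc dc).
Local Notation Eqn := (Defs.eqn Mc Nc dc).
Local Notation Var := (Defs.var Mc Nc dc).
Local Notation Eqns := (eqns Mc Nc dc).
Local Notation varS := (@varE K Mc Nc dc).

Lemma bnd_large : M + N + d < B.
Proof.
rewrite /bnd ltnS.
exact: (leq_bigmax (F := fun _ : 'I_K => M + N + d) (Ordinal (ltnW le2K))).
Qed.

Lemma card_varE (E : Eqn) : #|varS E| = (M - d) + (N - d).
Proof.
case: E => [[[k j] m] n].
pose tx := (fun i => (false, j, n, i) : Var) @: [set i : 'I_B | i < M - d].
pose rx := (fun i => (true, k, m, i) : Var) @: [set i : 'I_B | i < N - d].
have split_vars : varS (k, j, m, n) = tx :|: rx.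
  by apply/setP => -[[[[] k'] n'] i]; rewrite !inE !mem_imset_last !inE.
have disjoint_vars : tx :&: rx = set0.
  by apply/setP => -[[[[] k'] n'] i]; rewrite !inE !mem_imset_last ?andbF.
have tag_inj (b : bool) (u : 'I_K) (l : 'I_B) :
    injective (fun i => (b, u, l, i) : Var) by move=> x y [].
have large := bnd_large.
rewrite split_vars cardsU disjoint_vars cards0 subn0.
by rewrite !card_imset ?card_ord_lt //; lia.
Qed.

(* The equations containing a given
   variable of user u are indexed by these pairs: the other user is the victim
   of a transmit-side variable and the interferer of a receive-side one. *)
Definition partner_streams (u : 'I_K) : {set 'I_K * 'I_B} :=
  setX [set~ u] [set l : 'I_B | l < d].

Lemma card_partner_streams (u : 'I_K) : #|partner_streams u| = (K - 1) * d.
Proof.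
have large := bnd_large.
by rewrite cardsX cardsC1 card_ord subn1 card_ord_lt //; lia.
Qed.

Lemma degree_varE (E0 : Eqn) (v : Var) : E0 \in Eqns -> v \in varS E0 ->
  degree_in varS Eqns v = (K - 1) * d.
Proof.
case: E0 => [[[k0 j0] m0] n0]; case: v => [[[[] kv] nv] iv];
  rewrite !inE /= ?orbF => /and3P[_ m0_lt n0_lt] /and3P[/eqP-> /eqP-> iv_lt].
- rewrite -(card_partner_streams k0) -(card_imset _ (f := fun p => (k0, p.1, m0, p.2)));
    last by move=> [x1 x2] [y1 y2] [-> ->].
  apply: eq_card => -[[[k j] m] n]; rewrite !inE mem_imset_24 !inE /= iv_lt andbT.
  rewrite (eq_sym k0) (eq_sym m0) (eq_sym j).
  by case: (k =P k0) => [->|_]; case: (m =P m0) => [->|_]; rewrite ?andbF ?m0_lt ?andbT.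
- rewrite -(card_partner_streams j0) -(card_imset _ (f := fun p => (p.1, j0, p.2, n0)));
    last by move=> [x1 x2] [y1 y2] [-> ->].
  apply: eq_card => -[[[k j] m] n]; rewrite !inE mem_imset_13 !inE /= iv_lt andbT orbF.
  rewrite (eq_sym j0) (eq_sym n0).
  by case: (j =P j0) => [->|_]; case: (n =P n0) => [->|_]; rewrite ?andbF ?n0_lt ?andbT.
Qed.

Lemma eqns_nonempty : Eqns != set0.
Proof.
have B_gt0 : 0 < B by apply: leq_ltn_trans bnd_large.
apply/set0Pn; exists (Ordinal (ltnW le2K), Ordinal le2K, Ordinal B_gt0, Ordinal B_gt0).
by rewrite !inE /= d_gt0.
Qed.

Lemma sym_proper_iff : sym_proper K M N d <-> (K - 1) * d <= (M - d) + (N - d).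
Proof.
apply: (iff_trans (proper_hall _ _ _)); split.
  by apply: degree_le_of_hall eqns_nonempty degree_varE => E _; apply: card_varE.
move=> le_cr; apply: (hall_of_degree_le (fun E _ => card_varE E) _ le_cr).
  by rewrite (leq_trans _ le_cr) // muln_gt0 d_gt0 subn_gt0 le2K.
by move=> E v EE vE; rewrite (degree_varE EE vE).
Qed.

End Symmetric.

Lemma sym_Nv_closed (K M N d : nat) : sym_Nv K M N d = K * d * (M + N - 2 * d).
Proof. by rewrite /sym_Nv /Nv sum_nat_const card_ord mulnA. Qed.

Lemma sym_Ne_closed (K M N d : nat) : sym_Ne K M N d = K * (K - 1) * d ^ 2.
Proof.
have others (k : 'I_K) : \sum_(j < K | j != k) d * d = (K - 1) * d ^ 2.
  rewrite sum_nat_cond_const mulnn; congr (_ * _).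
  rewrite -[in RHS](card_ord K) subn1 -(cardsC1 k).
  by apply: eq_card => j; rewrite !inE.
rewrite /sym_Ne /Ne (eq_bigr _ (fun k _ => others k)).
by rewrite sum_nat_const card_ord mulnA.
Qed.

(* N_e <= N_v is the properness criterion multiplied by K * d. *)
Lemma counts_criterion (K M N d : nat) : 0 < K -> 0 < d -> d <= M -> d <= N ->
  (K * (K - 1) * d ^ 2 <= K * d * (M + N - 2 * d)) = ((K - 1) * d <= (M - d) + (N - d)).
Proof.
move=> K_gt0 d_gt0 le_dM le_dN.
have -> : K * (K - 1) * d ^ 2 = K * d * ((K - 1) * d) by nia.
have -> : M + N - 2 * d = (M - d) + (N - d) by lia.
by rewrite leq_pmul2l // muln_gt0 K_gt0.
Qed.

(* (K + 1) * d <= M + N is the properness criterion with d added twice. *)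
Lemma antenna_criterion (K M N d : nat) : 0 < K -> d <= M -> d <= N ->
  ((K + 1) * d <= M + N) = ((K - 1) * d <= (M - d) + (N - d)).
Proof. by move=> K_gt0 le_dM le_dN; apply/idP/idP; nia. Qed.

Theorem theorem2 (K M N d : nat) :
  (2 <= K)%N -> (0 < M)%N -> (0 < N)%N -> (0 < d)%N -> (d <= minn M N)%N ->
  [/\ sym_Nv K M N d = K * d * (M + N - 2 * d),
      sym_Ne K M N d = K * (K - 1) * d ^ 2,
      (sym_proper K M N d <-> (sym_Ne K M N d <= sym_Nv K M N d)%N)
    & (sym_proper K M N d <-> ((K + 1) * d <= M + N)%N)].
Proof.
move=> le2K _ _ d_gt0; rewrite leq_min => /andP[le_dM le_dN].
have K_gt0 : 0 < K by apply: ltnW.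
have proper_iff := sym_proper_iff le2K d_gt0 le_dM le_dN.
by rewrite sym_Nv_closed sym_Ne_closed counts_criterion // antenna_criterion.
Qed.
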